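(* Let $n\ge 1$ and let $\Lambda$ be a noncrossing set partition of $[n]=\{1,\dots,n\}$ with $k$ blocks. Then $\Lambda^+$ is a noncrossing set partition of $[n]$ with $n+1-k$ blocks.
   Context: A set partition is a set of nonempty, pairwise disjoint finite sets of integers (its blocks); it is a partition of $\mathcal X$ if the union of its blocks is $\mathcal X$. A pair $(i,j)$ is an arc of a set partition $\Lambda$ if $i<j$, $i$ and $j$ lie in the same block, and $j$ is the least element of that block greater than $i$; $\mathrm{Arc}(\Lambda)$ denotes the set of arcs (a partition is determined by its ground set and its arcs). $\Lambda$ is noncrossing if there are no two arcs $(i,k),(j,l)\in\mathrm{Arc}(\Lambda)$ with $i<j<k<l$. For a finite set $\mathcal X\subset\mathbb Z$ and a partition $\Lambda$ of $\mathcal X$, $\Lambda^+$ is the partition of $\mathcal X$ with arc set $(\mathrm{Arc}(\Lambda)\setminus\mathcal S)\cup\mathcal T$, where $\mathcal S=\{(i,i+1):i\in\mathbb Z\}$ and $\mathcal T$ is the set of pairs $(i,i+1)\in\mathcal X\times\mathcal X$ such that $i$ is the maximal element of its block of $\Lambda$ and $i+1$ is the minimal element of its block of $\Lambda$. *)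

(* Integers 1..n are encoded as the elements i of 'I_n.+1 with 0 < i
   (value of the ordinal = the integer itself). *)
From mathcomp Require Import all_boot.
Set Implicit Arguments. Unset Strict Implicit. Unset Printing Implicit Defensive.

Definition ground (n : nat) : {set 'I_n.+1} := [set i : 'I_n.+1 | 0 < val i].

Definition part_arc (n : nat) (P : {set {set 'I_n.+1}}) (i j : 'I_n.+1) : bool :=
  [exists B in P, [&& i \in B, j \in B, val i < val j &
     [forall m in B, (val i < val m) ==> (val j <= val m)]]].

Definition noncrossing (n : nat) (P : {set {set 'I_n.+1}}) : bool :=
  ~~ [exists i, exists j, exists k, exists l,
       [&& part_arc P i k, part_arc P j l, val i < val j, val j < val k & val k < val l]].

Definition is_block_max (n : nat) (P : {set {set 'I_n.+1}}) (i : 'I_n.+1) : bool :=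
  [exists B in P, (i \in B) && [forall m in B, val m <= val i]].
Definition is_block_min (n : nat) (P : {set {set 'I_n.+1}}) (i : 'I_n.+1) : bool :=
  [exists B in P, (i \in B) && [forall m in B, val i <= val m]].

(* membership in (Arc(P) \ S) ∪ T, where X = ground n *)
Definition plus_arc (n : nat) (P : {set {set 'I_n.+1}}) (i j : 'I_n.+1) : bool :=
  (part_arc P i j && (val j != (val i).+1))
  || [&& i \in ground n, j \in ground n, val j == (val i).+1,
         is_block_max P i & is_block_min P j].

From mathcomp Require Import all_boot.
Set Implicit Arguments. Unset Strict Implicit. Unset Printing Implicit Defensive.

(* A partition is encoded by its arcs, which form a partial injection increasing
   along the integers: its blocks are the maximal chains of arcs, and its blocks
   are counted by their maxima, i.e. by the elements without outgoing arc.  The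
   arcs of Λ^+ again form such a partial injection, since an arc (i, i+1) is
   added exactly when i ends and i+1 starts a block of Λ, so they define a
   partition.  No arc can cross an arc (i, i+1), so Λ^+ is noncrossing.  Since Λ
   is noncrossing, i has an outgoing arc in Λ^+ iff i < n and i+1 is the minimum
   of a block of Λ; these i correspond to the k - 1 block minima other than 1,
   hence Λ^+ has n - (k - 1) block maxima. *)

Section Extremum.
Variables (T : finType) (f : T -> nat).
Hypothesis f_inj : injective f.

Lemma card_argmax (B : {set T}) :
  B != set0 -> #|[set i in B | [forall m in B, f m <= f i]]| = 1.
Proof.
case/set0Pn => x xB; apply/eqP/cards1P.
have [i iB imax] : {i | i \in B & forall m, m \in B -> f m <= f i}.
  by case: (arg_maxnP f xB) => i; exists i.
exists i; apply/setP => j; rewrite !inE; apply/idP/eqP => [/andP[jB /forall_inP jmax]|->].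
  by apply/f_inj/eqP; rewrite eqn_leq jmax ?imax.
by rewrite iB; apply/forall_inP.
Qed.

Lemma card_argmin (B : {set T}) :
  B != set0 -> #|[set i in B | [forall m in B, f i <= f m]]| = 1.
Proof.
case/set0Pn => x xB; apply/eqP/cards1P.
have [i iB imin] : {i | i \in B & forall m, m \in B -> f i <= f m}.
  by case: (arg_minnP f xB) => i; exists i.
exists i; apply/setP => j; rewrite !inE; apply/idP/eqP => [/andP[jB /forall_inP jmin]|->].
  by apply/f_inj/eqP; rewrite eqn_leq jmin ?imin.
by rewrite iB; apply/forall_inP.
Qed.

End Extremum.

Section PartitionArcs.
Variables (n : nat) (D : {set 'I_n.+1}) (P : {set {set 'I_n.+1}}).
Hypothesis partP : partition P D.

Let tiP : trivIset P := partition_trivIset partP.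

Lemma mem_block_partition B x : B \in P -> x \in B -> x \in D.
Proof.
by move=> BP xB; rewrite -(cover_partition partP); apply/bigcupP; exists B.
Qed.

Lemma block_eq B B' x : B \in P -> B' \in P -> x \in B -> x \in B' -> B = B'.
Proof.
by move=> BP B'P xB xB'; rewrite -(def_pblock tiP BP xB) (def_pblock tiP B'P xB').
Qed.

Lemma part_arcP i j :
  reflect (exists2 B, B \in P & [/\ i \in B, j \in B, val i < val j &
             forall m, m \in B -> val i < val m -> val j <= val m])
          (part_arc P i j).
Proof.
apply: (iffP exists_inP) => [[B BP /and4P[iB jB ij /forall_inP jmin]]|[B BP [iB jB ij jmin]]].
  by exists B => //; split=> // m mB; apply/implyP/jmin.
by exists B; rewrite // iB jB ij; apply/forall_inP => m mB; apply/implyP/jmin.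
Qed.

Lemma part_arc_lt i j : part_arc P i j -> val i < val j.
Proof. by case/part_arcP => B _ []. Qed.

Lemma part_arc_mem i j : part_arc P i j -> (i \in D) && (j \in D).
Proof. by case/part_arcP => B BP [iB jB _ _]; rewrite !(mem_block_partition BP). Qed.

Lemma part_arc_functional i j j' : part_arc P i j -> part_arc P i j' -> j = j'.
Proof.
case/part_arcP => B BP [iB jB ij jmin]; case/part_arcP => B' B'P [iB' jB' ij' jmin'].
have eBB' := block_eq BP B'P iB iB'; subst B'.
by apply: val_inj; apply/eqP; rewrite eqn_leq jmin ?jmin'.
Qed.

Lemma part_arc_inj i i' j : part_arc P i j -> part_arc P i' j -> i = i'.
Proof.
case/part_arcP => B BP [iB jB ij jmin]; case/part_arcP => B' B'P [iB' jB' ij' jmin'].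
have eBB' := block_eq BP B'P jB jB'; subst B'.
apply: val_inj; case: (ltngtP (val i) (val i')) => // [ii' | i'i].
  by have := jmin _ iB' ii'; rewrite leqNgt ij'.
by have := jmin' _ iB i'i; rewrite leqNgt ij.
Qed.

Lemma is_block_maxE B i :
  B \in P -> i \in B -> is_block_max P i = [forall m in B, val m <= val i].
Proof.
move=> BP iB; apply/exists_inP/idP => [[B' B'P /andP[iB' imax]]|imax].
  by rewrite (block_eq BP B'P iB iB').
by exists B; rewrite ?iB.
Qed.

Lemma is_block_minE B i :
  B \in P -> i \in B -> is_block_min P i = [forall m in B, val i <= val m].
Proof.
move=> BP iB; apply/exists_inP/idP => [[B' B'P /andP[iB' imin]]|imin].
  by rewrite (block_eq BP B'P iB iB').
by exists B; rewrite ?iB.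
Qed.

Lemma block_max_transversal : is_transversal [set i | is_block_max P i] P D.
Proof.
rewrite /is_transversal partP /=; apply/andP; split.
  by apply/subsetP => i; rewrite inE => /exists_inP[B BP /andP[/(mem_block_partition BP)]].
apply/forall_inP => B BP; have B0 := partition_neq0 partP BP.
apply/eqP; rewrite -(card_argmax val_inj B0).
apply: eq_card => i; rewrite !inE andbC.
by case iB: (i \in B); rewrite ?(is_block_maxE BP iB).
Qed.

Lemma block_min_transversal : is_transversal [set i | is_block_min P i] P D.
Proof.
rewrite /is_transversal partP /=; apply/andP; split.
  by apply/subsetP => i; rewrite inE => /exists_inP[B BP /andP[/(mem_block_partition BP)]].
apply/forall_inP => B BP; have B0 := partition_neq0 partP BP.
apply/eqP; rewrite -(card_argmin val_inj B0).
apply: eq_card => i; rewrite !inE andbC.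
by case iB: (i \in B); rewrite ?(is_block_minE BP iB).
Qed.

Lemma card_block_max : #|[set i | is_block_max P i]| = #|P|.
Proof. exact: card_transversal block_max_transversal. Qed.

Lemma card_block_min : #|[set i | is_block_min P i]| = #|P|.
Proof. exact: card_transversal block_min_transversal. Qed.

Lemma has_part_arc_out B i :
  B \in P -> i \in B -> [exists j, part_arc P i j] = [exists m in B, val i < val m].
Proof.
move=> BP iB; apply/existsP/exists_inP => [[j /part_arcP[B' B'P [iB' jB' ij _]]]|[m mB im]].
  by exists j; rewrite ?(block_eq BP B'P iB iB').
pose above := [pred x | (x \in B) && (val i < val x)].
have [j /andP[jB ij] jmin] := @arg_minnP _ m above val (introT andP (conj mB im)).
exists j; apply/part_arcP; exists B => //; split=> // x xB ix.
by apply: jmin; rewrite /= xB.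
Qed.

Lemma has_part_arc_in B j :
  B \in P -> j \in B -> [exists i, part_arc P i j] = [exists m in B, val m < val j].
Proof.
move=> BP jB; apply/existsP/exists_inP => [[i /part_arcP[B' B'P [iB' jB' ij _]]]|[m mB mj]].
  by exists i; rewrite ?(block_eq BP B'P jB jB').
pose below := [pred x | (x \in B) && (val x < val j)].
have [i /andP[iB ij] imax] := @arg_maxnP _ m below val (introT andP (conj mB mj)).
exists i; apply/part_arcP; exists B => //; split=> // x xB ix.
rewrite leqNgt; apply/negP => xj.
by have := imax x; rewrite /= xB xj leqNgt ix => /(_ isT).
Qed.

Lemma is_block_max_arc i :
  is_block_max P i = (i \in D) && ~~ [exists j, part_arc P i j].
Proof.
case iD: (i \in D); last first.
  by apply: contraFF iD => /exists_inP[B BP /andP[/(mem_block_partition BP)]].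
have iB : i \in pblock P i by rewrite mem_pblock (cover_partition partP).
have BP : pblock P i \in P by rewrite pblock_mem ?(cover_partition partP).
rewrite (is_block_maxE BP iB) (has_part_arc_out BP iB) negb_exists_in.
by apply: eq_forallb => m; rewrite leqNgt.
Qed.

Lemma is_block_min_arc j :
  is_block_min P j = (j \in D) && ~~ [exists i, part_arc P i j].
Proof.
case jD: (j \in D); last first.
  by apply: contraFF jD => /exists_inP[B BP /andP[/(mem_block_partition BP)]].
have jB : j \in pblock P j by rewrite mem_pblock (cover_partition partP).
have BP : pblock P j \in P by rewrite pblock_mem ?(cover_partition partP).
rewrite (is_block_minE BP jB) (has_part_arc_in BP jB) negb_exists_in.
by apply: eq_forallb => m; rewrite leqNgt.
Qed.

End PartitionArcs.

Section PartitionOfArcs.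
Variables (n : nat) (D : {set 'I_n.+1}) (A : rel 'I_n.+1).
Hypothesis A_lt : forall i j, A i j -> val i < val j.
Hypothesis A_mem : forall i j, A i j -> (i \in D) && (j \in D).
Hypothesis A_functional : forall i j j', A i j -> A i j' -> j = j'.
Hypothesis A_inj : forall i i' j, A i j -> A i' j -> i = i'.

Lemma connect_le x y : connect A x y -> val x <= val y.
Proof.
case/connectP => p; elim: p x => [|z p IHp] x /=; first by move=> _ ->.
by case/andP => /A_lt/ltnW xz /IHp zy /zy; apply: leq_trans.
Qed.

Lemma connect_first x y : connect A x y -> x != y -> exists2 s, A x s & connect A s y.
Proof.
case/connectP => [[|s p]] /=; first by move=> _ ->; rewrite eqxx.
by case/andP => xs sp ->; exists s => //; apply/connectP; exists p.
Qed.

Lemma connect_last x y w : connect A x y -> A w y -> x != y -> connect A x w.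
Proof.
case/connectP => p; elim/last_ind: p => [|p z _]; first by move=> _ ->; rewrite eqxx.
rewrite rcons_path last_rcons => /andP[xp Az] -> /(A_inj Az) <- _.
by apply/connectP; exists p.
Qed.

Definition chained x y := connect A x y || connect A y x.

Lemma chained_out x y z : chained x y -> A y z -> chained x z.
Proof.
case/orP => [xy | yx] yz; first by rewrite /chained (connect_trans xy (connect1 yz)).
have [<- | nyx] := eqVneq y x; first by rewrite /chained (connect1 yz).
by have [s /(A_functional yz) <- sx] := connect_first yx nyx; rewrite /chained sx orbT.
Qed.

Lemma chained_in x y z : chained x y -> A z y -> chained x z.
Proof.
case/orP => [xy | yx] zy; last by rewrite /chained (connect_trans (connect1 zy) yx) orbT.
have [<- | nxy] := eqVneq y x; first by rewrite /chained (connect1 zy) orbT.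
by rewrite /chained (connect_last xy zy) // eq_sym.
Qed.

Lemma chained_connect x y z : chained x y -> connect A y z -> chained x z.
Proof.
move=> xy /connectP[p]; elim: p y xy => [|w p IHp] y xy /=; first by move=> _ ->.
by case/andP => yw wp; apply: IHp wp; apply: chained_out yw.
Qed.

Lemma chained_connect_rev x y z : chained x y -> connect A z y -> chained x z.
Proof.
move=> xy /connectP[p]; elim: p z => [|w p IHp] z /=; first by move=> _ <-.
by case/andP => zw wp /(IHp _ wp) xw; apply: chained_in zw.
Qed.

Lemma chained_sym x y : chained x y = chained y x.
Proof. by rewrite /chained orbC. Qed.

Lemma chained_trans y x z : chained x y -> chained y z -> chained x z.
Proof. by move=> xy /orP[]; [apply: chained_connect | apply: chained_connect_rev]. Qed.

Lemma chained_equiv : equivalence_rel chained.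
Proof.
move=> x y z; split=> [|xy]; first by rewrite /chained connect0.
by apply/idP/idP; [rewrite chained_sym in xy; apply: chained_trans | apply: chained_trans].
Qed.

Definition arc_partition := equivalence_partition chained D.

Lemma arc_partitionP : partition arc_partition D.
Proof. by apply: equivalence_partitionP => x y z _ _ _; apply: chained_equiv. Qed.

Lemma connect_chained x y : chained x y -> val x < val y -> connect A x y.
Proof. by case/orP => // /connect_le; rewrite leqNgt => /negbTE ->. Qed.

Lemma part_arc_arc_partition i j : part_arc arc_partition i j = A i j.
Proof.
apply/part_arcP/idP => [[_ /imsetP[x xD ->]] | ij].
  case; rewrite !inE => /andP[iD xi] /andP[jD xj] ij jmin.
  have /connect_chained /(_ ij) ij' : chained i j.
    by apply: chained_trans xj; rewrite chained_sym.
  have [|s Ais sj] := connect_first ij'; first by rewrite -(inj_eq val_inj) ltn_eqF.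
  have /andP[_ sD] := A_mem Ais.
  suff /val_inj -> : val j = val s by [].
  apply/eqP; rewrite eqn_leq (connect_le sj) andbT jmin ?A_lt // inE sD.
  exact: chained_out xi Ais.
exists [set y in D | chained i y]; first by rewrite imset_f // (andP (A_mem ij)).1.
have /andP[iD jD] := A_mem ij.
rewrite !inE iD jD /chained connect0 (connect1 ij) A_lt //; split=> // m.
rewrite inE => /andP[_ /connect_chained im'] im.
have [|s Ais sm] := connect_first (im' im); first by rewrite -(inj_eq val_inj) ltn_eqF.
by rewrite (A_functional ij Ais) connect_le.
Qed.

End PartitionOfArcs.

Lemma val_inord n m : m <= n -> val (inord m : 'I_n.+1) = m.
Proof. exact: inordK. Qed.

Lemma card_ground n : #|ground n| = n.
Proof.
have -> : ground n = [set~ ord0] by apply/setP => i; rewrite !inE -lt0n.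
by rewrite cardsC1 card_ord.
Qed.

Lemma card_succ_in n (M : {set 'I_n.+1}) :
  #|[set i in ground n | (val i < n) && (inord (val i).+1 \in M)]| =
  #|[set j in M | 1 < val j]|.
Proof.
set S := [set i in ground n | _].
have succ_inj : {in S &, injective (fun i : 'I_n.+1 => inord (val i).+1 : 'I_n.+1)}.
  move=> i i'; rewrite !in_set => /and3P[_ lt_in _] /and3P[_ lt_i'n _] /(congr1 val).
  by rewrite !val_inord // => /succn_inj /val_inj.
rewrite -(card_in_imset succ_inj); apply: eq_card => j; rewrite in_set.
apply/imsetP/andP => [[i] | [jM gt1_j]].
  by rewrite in_set inE => /and3P[i_gt0 lt_in iM] ->; rewrite val_inord.
have j_gt0 : 0 < val j := ltnW gt1_j.
have le_pred_n : (val j).-1 <= n := leq_trans (leq_pred _) (leq_ord j).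
exists (inord (val j).-1); last by rewrite val_inord // (prednK j_gt0) inord_val.
by rewrite in_set inE val_inord // (prednK j_gt0) inord_val jM leq_ord -ltnS (prednK j_gt0) gt1_j.
Qed.

Lemma noncrossingP n (P : {set {set 'I_n.+1}}) :
  reflect (forall a b c d, part_arc P a c -> part_arc P b d ->
             val a < val b -> val b < val c -> val c < val d -> False)
          (noncrossing P).
Proof.
apply: (iffP negP) => [crossP a b c d ac bd ab bc cd | ncP].
  by apply: crossP; apply/existsP; exists a; apply/existsP; exists b;
     apply/existsP; exists c; apply/existsP; exists d; rewrite ac bd ab bc cd.
case/existsP => a /existsP[b /existsP[c /existsP[d]]].
by case/and5P; apply: ncP.
Qed.

Section PlusArcs.
Variables (n : nat) (L : {set {set 'I_n.+1}}).
Hypothesis partL : partition L (ground n).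
Hypothesis ncL : noncrossing L.

Lemma plus_arc_lt i j : plus_arc L i j -> val i < val j.
Proof. by case/orP => [/andP[/part_arc_lt] | /and5P[_ _ /eqP -> _ _]]. Qed.

Lemma plus_arc_mem i j : plus_arc L i j -> (i \in ground n) && (j \in ground n).
Proof. by case/orP => [/andP[/(part_arc_mem partL)] | /and5P[-> -> _ _ _]]. Qed.

Lemma part_arc_block_max i j : part_arc L i j -> is_block_max L i = false.
Proof.
by move=> ij; rewrite (is_block_max_arc partL); apply/nandP; right; apply/negPn/existsP; exists j.
Qed.

Lemma part_arc_block_min i j : part_arc L i j -> is_block_min L j = false.
Proof.
by move=> ij; rewrite (is_block_min_arc partL); apply/nandP; right; apply/negPn/existsP; exists i.
Qed.

Lemma plus_arc_functional i j j' : plus_arc L i j -> plus_arc L i j' -> j = j'.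
Proof.
case/orP => [/andP[ij _] | /and5P[_ _ /eqP ej maxi _]];
case/orP => [/andP[ij' _] | /and5P[_ _ /eqP ej' maxi' _]].
- exact: (part_arc_functional partL ij ij').
- by rewrite (part_arc_block_max ij) in maxi'.
- by rewrite (part_arc_block_max ij') in maxi.
- by apply: val_inj; rewrite ej ej'.
Qed.

Lemma plus_arc_inj i i' j : plus_arc L i j -> plus_arc L i' j -> i = i'.
Proof.
case/orP => [/andP[ij _] | /and5P[_ _ /eqP ej _ minj]];
case/orP => [/andP[ij' _] | /and5P[_ _ /eqP ej' _ minj']].
- exact: (part_arc_inj partL ij ij').
- by rewrite (part_arc_block_min ij) in minj'.
- by rewrite (part_arc_block_min ij') in minj.
- by apply/val_inj/succn_inj; rewrite -ej ej'.
Qed.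

Lemma plus_arc_noncrossing a b c d : plus_arc L a c -> plus_arc L b d ->
  val a < val b -> val b < val c -> val c < val d -> False.
Proof.
case/orP => [/andP[ac _] | /and5P[_ _ /eqP -> _ _]] bd ab bc cd; last first.
  by move: bc; rewrite ltnS leqNgt ab.
case/orP: bd => [/andP[bd _] | /and5P[_ _ /eqP ed _ _]]; last first.
  by move: cd; rewrite ed ltnS leqNgt bc.
exact: (elimT (noncrossingP L) ncL a b c d ac bd ab bc cd).
Qed.

Local Notation succ i := (inord (val i).+1 : 'I_n.+1).

Lemma has_plus_arc_out i : i \in ground n ->
  [exists j, plus_arc L i j] = (val i < n) && is_block_min L (succ i).
Proof.
move=> iG; apply/existsP/andP
  => [[j /orP[/andP[ij nj] | /and5P[_ jG /eqP ej _ minj]]] | [lt_in mini]].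
- have lt_ij := part_arc_lt ij.
  have lt_in : val i < n := leq_trans lt_ij (leq_ord j).
  split=> //; rewrite (is_block_min_arc partL) inE val_inord //=.
  apply/existsP => -[h hi]; have := part_arc_lt hi; rewrite val_inord // ltnS.
  case: (ltngtP (val h) (val i)) => // [lt_hi | /val_inj eq_hi] _.
    apply: (elimT (noncrossingP L) ncL h i (succ i) j hi ij lt_hi).
      by rewrite val_inord.
    by rewrite val_inord // ltn_neqAle eq_sym nj.
  by move: nj; rewrite eq_hi in hi; rewrite (part_arc_functional partL ij hi) val_inord ?eqxx.
- have lt_in : val i < n by rewrite -ej leq_ord.
  by split=> //; rewrite [succ i](_ : _ = j) //; apply: val_inj; rewrite val_inord.
- have [maxi | ] := boolP (is_block_max L i).
    by exists (succ i); rewrite /plus_arc iG !inE val_inord ?eqxx ?maxi ?mini ?orbT.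
  rewrite (is_block_max_arc partL) iG negbK => /existsP[j ij]; exists j.
  rewrite /plus_arc ij /=; apply/orP; left; apply: contraTneq mini => ej.
  have -> : succ i = j by apply: val_inj; rewrite val_inord.
  by rewrite (part_arc_block_min ij).
Qed.

Hypothesis n_gt0 : 0 < n.

Lemma is_block_min_one : is_block_min L (inord 1).
Proof.
rewrite (is_block_min_arc partL) inE val_inord //=.
apply/existsP => -[h /[dup] /(part_arc_mem partL) /andP[hG _] /part_arc_lt].
by rewrite inE in hG; rewrite val_inord // ltnS leqNgt hG.
Qed.

Lemma card_block_min_gt1 : #|[set j in [set j | is_block_min L j] | 1 < val j]| = #|L|.-1.
Proof.
rewrite -(card_block_min partL); set mins := [set j | is_block_min L j].
have mins_eq : mins = inord 1 |: [set j in mins | 1 < val j].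
  apply/setP => j; rewrite !inE; case: eqP => [-> | nj] /=.
    by rewrite is_block_min_one.
  apply/idP/andP => [minj | []//]; split=> //.
  move: minj; rewrite (is_block_min_arc partL) inE => /andP[j_gt0 _].
  rewrite ltn_neqAle j_gt0 andbT; apply/eqP => j1.
  by apply: nj; apply: val_inj; rewrite val_inord.
by rewrite {2}mins_eq cardsU1 !inE val_inord // ltnn andbF.
Qed.

Lemma card_plus_partition Lp : partition Lp (ground n) ->
  (forall i j, part_arc Lp i j = plus_arc L i j) -> #|Lp| = n.+1 - #|L|.
Proof.
move=> partLp arcLp; rewrite -(card_block_max partLp).
have -> : [set i | is_block_max Lp i] =
          ground n :\: [set i in ground n | (val i < n) && (succ i \in [set j | is_block_min L j])].
  apply/setP => i; rewrite in_setD in_set (is_block_max_arc partLp) andbC.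
  case iG: (i \in ground n); rewrite ?andbF // !andbT in_set iG /= in_set -has_plus_arc_out //.
  by congr negb; apply: eq_existsb => j; apply: arcLp.
rewrite cardsD (setIidPr _); last by apply/subsetP => i; rewrite in_set => /andP[].
rewrite card_ground card_succ_in card_block_min_gt1.
have : 0 < #|L| by rewrite -(card_block_min partL) (cardD1 (inord 1)) inE is_block_min_one.
by case: #|L| => // k _; rewrite subSS.
Qed.

End PlusArcs.

Theorem proposition2p4 (n k : nat) (L : {set {set 'I_n.+1}}) :
  1 <= n -> finset.partition L (ground n) -> noncrossing L -> #|L| = k ->
  exists Lp : {set {set 'I_n.+1}},
    [/\ finset.partition Lp (ground n),
        (forall i j, part_arc Lp i j = plus_arc L i j),
        noncrossing Lp &
        #|Lp| = n.+1 - k].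
Proof.
move=> n_gt0 partL ncL <-.
have fun_plus := plus_arc_functional partL; have inj_plus := plus_arc_inj partL.
have partLp := arc_partitionP (ground n) fun_plus inj_plus.
have arcLp := part_arc_arc_partition (@plus_arc_lt n L) (plus_arc_mem partL) fun_plus inj_plus.
exists (arc_partition (ground n) (plus_arc L)); split=> //.
  by apply/noncrossingP => a b c d; rewrite !arcLp; apply: plus_arc_noncrossing.
exact: card_plus_partition.
Qed.
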